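(* Let $R = \bigoplus_{n \ge 0} R_n$ be a Noetherian standard graded ring over a local Artinian ring $R_0$, and let $E$ be a finitely generated graded $R$-module with $\dim E = 0$. Let $d$ be the maximal degree of a minimal homogeneous generator of $E$, let $e = \ell(E)$, and let $q = \sum_{i \le d} \ell(E_i)$. Then: (i) $\operatorname{reg}(E) \le d + e - q$; (ii) $\operatorname{reg}(E) = d + e - q$ if and only if $\ell(E_t) = 1$ for all $d+1 \le t \le d+e-q$ and $\ell(E_t) = 0$ for all $t \ge d+e-q+1$.
   Context: $R_+ = \bigoplus_{n>0}R_n$. For a finitely generated graded $R$-module $E$ of dimension $r$, $a_i(E) = \sup\{n \mid H^i_{R_+}(E)_n \ne 0\}$ and $\operatorname{reg}(E) = \max\{a_i(E)+i \mid 0 \le i \le r\}$. Lengths $\ell$ are over $R_0$. *)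

From mathcomp Require Import all_boot all_order all_algebra.
Set Implicit Arguments. Unset Strict Implicit. Unset Printing Implicit Defensive.
Import Order.TTheory GRing.Theory Num.Theory.
Local Open Scope ring_scope.

Section RingDefs.
Variable R : comNzRingType.

Definition ideal (I : {pred R}) :=
  [/\ 0 \in I, (forall x y, x \in I -> y \in I -> x + y \in I)
    & (forall r x, x \in I -> r * x \in I)].

Definition fg_ideal (I : {pred R}) :=
  exists s : seq R, forall x, x \in I <->
    exists c : nat -> R, x = \sum_(i < size s) c i * s`_i.

Definition noetherian_ring := forall I : {pred R}, ideal I -> fg_ideal I.

Definition prime_ideal (P : {pred R}) :=
  [/\ ideal P, 1 \notin P & forall a b, a * b \in P -> a \in P \/ b \in P].

Variable Rd : nat -> {pred R}.

Definition graded_ring :=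
  [/\ (forall n, 0 \in Rd n /\ forall x y, x \in Rd n -> y \in Rd n -> x - y \in Rd n),
      1 \in Rd 0,
      (forall m n x y, x \in Rd m -> y \in Rd n -> x * y \in Rd (m + n)%N),
      (forall x, exists N (f : nat -> R), (forall i, f i \in Rd i) /\ x = \sum_(i < N) f i)
    & (forall N (f : nat -> R), (forall i, f i \in Rd i) -> \sum_(i < N) f i = 0 ->
         forall i, (i < N)%N -> f i = 0)].

(* standard graded: R = R_0[R_1], i.e. R_{n+1} = R_1 R_n *)
Definition standard_graded :=
  forall n x, x \in Rd n.+1 ->
    exists a b : seq R, [/\ size a = size b, (forall i, (i < size a)%N -> a`_i \in Rd 1),
      (forall i, (i < size b)%N -> b`_i \in Rd n)
      & x = \sum_(i < size a) a`_i * b`_i].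

Definition ideal0 (I : {pred R}) :=
  [/\ {subset I <= Rd 0}, 0 \in I, (forall x y, x \in I -> y \in I -> x + y \in I)
    & (forall r x, r \in Rd 0 -> x \in I -> r * x \in I)].

Definition maximal_ideal0 (M : {pred R}) :=
  [/\ ideal0 M, 1 \notin M &
      forall J, ideal0 J -> {subset M <= J} -> 1 \in J \/ {subset J <= M}].

Definition local0 :=
  exists M, maximal_ideal0 M /\
    forall M', maximal_ideal0 M' -> {subset M' <= M} /\ {subset M <= M'}.

Definition artinian0 :=
  forall I : nat -> {pred R}, (forall n, ideal0 (I n)) ->
    (forall n, {subset I n.+1 <= I n}) ->
    exists N, forall n, (N <= n)%N -> {subset I N <= I n}.

Definition Rplus (x : R) :=
  exists N (f : nat -> R), (forall i, f i \in Rd i.+1) /\ x = \sum_(i < N) f i.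

Variable E : lmodType R.

Definition generates (g : seq E) :=
  forall x : E, exists c : nat -> R, x = \sum_(i < size g) c i *: g`_i.

Definition finitely_generated := exists g : seq E, generates g.

Definition in_ann (r : R) := forall x : E, r *: x = 0.

(* dim E = dim R/Ann(E) = 0 : some prime contains Ann(E), and there is no
   strict chain P ⊊ Q of primes containing Ann(E). *)
Definition dim_zero :=
  (exists P, prime_ideal P /\ forall r, in_ann r -> r \in P) /\
  forall P Q, prime_ideal P -> prime_ideal Q ->
    (forall r, in_ann r -> r \in P) -> {subset P <= Q} -> {subset Q <= P}.

Variable Ed : int -> {pred E}.

Definition graded_module :=
  [/\ (forall n, 0 \in Ed n /\ forall x y, x \in Ed n -> y \in Ed n -> x - y \in Ed n),
      (forall (m : nat) (n : int) r x, r \in Rd m -> x \in Ed n -> r *: x \in Ed (m%:Z + n)),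
      (forall x, exists (s : seq int) (f : int -> E),
          (forall i, f i \in Ed i) /\ x = \sum_(i <- s) f i)
    & (forall (s : seq int) (f : int -> E), uniq s -> (forall i, f i \in Ed i) ->
         \sum_(i <- s) f i = 0 -> forall i, i \in s -> f i = 0)].

Definition minimal_homogeneous_generators (g : seq E) (dg : seq int) :=
  [/\ size g = size dg, (forall i, (i < size g)%N -> g`_i \in Ed dg`_i),
      generates g
    & forall i, (i < size g)%N -> ~ generates (take i g ++ drop i.+1 g)].

Definition submodule0 (M : {pred E}) :=
  [/\ 0 \in M, (forall x y, x \in M -> y \in M -> x + y \in M)
    & (forall r x, r \in Rd 0 -> x \in M -> r *: x \in M)].

Definition chain0 (M : {pred E}) (c : nat -> {pred E}) (n : nat) :=
  (forall i, (i <= n)%N -> submodule0 (c i) /\ {subset c i <= M}) /\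
  (forall i, (i < n)%N -> {subset c i <= c i.+1} /\ exists x, x \in c i.+1 /\ x \notin c i).

Definition has_length (M : {pred E}) (n : nat) :=
  (exists c, chain0 M c n) /\ forall c m, chain0 M c m -> (m <= n)%N.

(* x is killed by R_+^k for some k (R_+^k is generated by k-fold products) *)
Definition Rplus_torsion (x : E) :=
  exists k : nat, forall r : seq R, size r = k -> (forall a, a \in r -> Rplus a) ->
    (\prod_(a <- r) a) *: x = 0.

Definition H0_nonzero_at (n : int) :=
  exists x, [/\ x \in Ed n, x != 0 & Rplus_torsion x].

(* a = a_0(E) = sup{n | H^0_{R_+}(E)_n <> 0}, attained *)
Definition is_a0 (a : int) :=
  H0_nonzero_at a /\ forall n, H0_nonzero_at n -> n <= a.

End RingDefs.

(* q = \sum_{i <= d} f i for a function f vanishing in sufficiently low degrees *)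
Definition sum_upto (f : int -> nat) (d : int) (q : nat) :=
  exists lo : int, [/\ lo <= d, (forall i, i < lo -> f i = 0%N)
    & q = (\sum_(0 <= k < `|d - lo|.+1) f (lo + k%:Z)%R)%N].

From mathcomp Require Import all_boot all_order all_algebra zify.
From Stdlib Require Import Classical ClassicalEpsilon.
Set Implicit Arguments. Unset Strict Implicit. Unset Printing Implicit Defensive.
Import Order.TTheory GRing.Theory Num.Theory.
Local Open Scope ring_scope.

(* Since [E] has finite length [e] and every nonzero component [E_t] has length
   at least 1, there is a largest [s] with [E_s <> 0]. Then [R_+ E_s = 0], so
   [a_0(E) = s]. As [R] is standard graded and [E] is generated in degrees
   [<= d], [E_(t+1) = R_1 E_t] for [t >= d]; hence [E_t <> 0] for all
   [d <= t <= s], and counting lengths of the components [E_t] gives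
   [e >= q + (s - d)], with equality iff [l(E_t) = 1] for [d < t <= s]. *)

Definition pred_of_prop (T : Type) (P : T -> Prop) : {pred T} :=
  fun z => if excluded_middle_informative (P z) then true else false.

Lemma pred_of_propP (T : Type) (P : T -> Prop) z : z \in pred_of_prop P <-> P z.
Proof. by rewrite unfold_in /pred_of_prop; case: excluded_middle_informative. Qed.

Section Chains.
Variables (R : comNzRingType) (Rd : nat -> {pred R}) (E : lmodType R).

Definition add_pred (A B : {pred E}) : {pred E} :=
  pred_of_prop (fun z => exists u v, [/\ u \in A, v \in B & z = u + v]).

Lemma add_predP (A B : {pred E}) z :
  reflect (exists u v, [/\ u \in A, v \in B & z = u + v]) (z \in add_pred A B).
Proof. by apply: (iffP idP) => /pred_of_propP. Qed.

Lemma mem_add_pred (A B : {pred E}) u v : u \in A -> v \in B -> u + v \in add_pred A B.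
Proof. by move=> Au Bv; apply/add_predP; exists u, v. Qed.

Lemma submodule0_zero : submodule0 Rd ((pred1 0 : pred E) : {pred E}).
Proof.
split=> [|x y|r x _]; rewrite ?inE //.
  by move=> /eqP-> /eqP->; rewrite addr0.
by move=> /eqP->; rewrite scaler0.
Qed.

Lemma submodule0_add (A B : {pred E}) :
  submodule0 Rd A -> submodule0 Rd B -> submodule0 Rd (add_pred A B).
Proof.
move=> [A0 AD AZ] [B0 BD BZ]; split.
- by rewrite -[0]addr0 mem_add_pred.
- move=> _ _ /add_predP[u [v [Au Bv ->]]] /add_predP[u' [v' [Au' Bv' ->]]].
  by rewrite addrACA mem_add_pred ?AD ?BD.
- move=> r _ Hr /add_predP[u [v [Au Bv ->]]].
  by rewrite scalerDr mem_add_pred ?AZ ?BZ.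
Qed.

Lemma chain0_sub (M M' : {pred E}) c n :
  {subset M <= M'} -> chain0 Rd M c n -> chain0 Rd M' c n.
Proof.
move=> sMM' [Hc Hstrict]; split=> // i /Hc[Hsub sM].
by split=> // x /sM /sMM'.
Qed.

(* A chain in [A] followed by [A + ch i] for a chain [ch] in [B]; the
   intersection [A ∩ B = 0] keeps the second half strict. *)
Lemma chain0_add (A B : {pred E}) c m ch n :
  submodule0 Rd A -> {in B &, forall x y, x - y \in B} ->
  (forall x, x \in A -> x \in B -> x = 0) ->
  chain0 Rd A c m -> chain0 Rd B ch n ->
  exists c', chain0 Rd (add_pred A B) c' (m + n).
Proof.
move=> subA subB AB0 [Hc Hc_strict] [Hch Hch_strict].
have ch0 j : (j <= n)%N -> 0 \in ch j by case/Hch => -[].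
have chB j : (j <= n)%N -> {subset ch j <= B} by case/Hch.
exists (fun i => if (i <= m)%N then c i else add_pred A (ch (i - m)%N)); split.
- move=> i le_imn; case: ifP => le_im.
    have [subc sA] := Hc i le_im; split=> // z /sA Az.
    by rewrite -[z]addr0 mem_add_pred // (chB 0%N) ?ch0.
  have le_n : (i - m <= n)%N by lia.
  split; first by apply: submodule0_add => //; case: (Hch _ le_n).
  by move=> _ /add_predP[u [v [Au chv ->]]]; rewrite mem_add_pred // (chB _ le_n).
- move=> i lt_imn; case: (ltngtP i m) lt_imn => [lt_im|lt_mi|->] lt_imn.
  + exact: Hc_strict.
  + rewrite subSn ?(ltnW lt_mi) //.
    have lt_n : (i - m < n)%N by lia.
    have [sub [x [chx nchx]]] := Hch_strict _ lt_n.
    split.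
      by move=> _ /add_predP[u [v [Au chv ->]]]; rewrite mem_add_pred ?sub.
    exists x; split; first by rewrite -[x]add0r mem_add_pred //; case: subA.
    apply/negP => /add_predP[u [v [Au chv x_uv]]].
    have u0 : u = 0.
      apply: AB0 => //; have -> : u = x - v by rewrite x_uv addrK.
      by apply: subB; [apply: (chB _ lt_n) | apply: (chB _ (ltnW lt_n))].
    by move: nchx; rewrite x_uv u0 add0r chv.
  + have lt_0n : (0 < n)%N by lia.
    rewrite subSnn.
    have [_ [x [chx nchx]]] := Hch_strict _ lt_0n.
    have xB : x \in B by apply: (chB 1%N).
    split.
      move=> z czm; rewrite -[z]addr0 mem_add_pred ?ch0 //.
      by case: (Hc m (leqnn m)) => _; apply.
    exists x; split; first by rewrite -[x]add0r mem_add_pred //; case: subA.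
    apply/negP => cmx; move: nchx.
    by rewrite (AB0 x) ?ch0 //; case: (Hc m (leqnn m)) => _; apply.
Qed.

End Chains.

Section GradedModule.
Variables (R : comNzRingType) (Rd : nat -> {pred R}) (E : lmodType R).
Variable Ed : int -> {pred E}.
Hypothesis HE : graded_module Rd Ed.

Lemma Ed0 n : 0 \in Ed n.
Proof. by case: HE => H _ _ _; case: (H n). Qed.

Lemma EdB n : {in Ed n &, forall x y, x - y \in Ed n}.
Proof. by case: HE => H _ _ _; case: (H n). Qed.

Lemma EdD n x y : x \in Ed n -> y \in Ed n -> x + y \in Ed n.
Proof. by move=> Hx Hy; rewrite -[y]opprK -[- y]sub0r EdB ?EdB ?Ed0. Qed.

Lemma EdZ (m : nat) n r x : r \in Rd m -> x \in Ed n -> r *: x \in Ed (m%:Z + n).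
Proof. by case: HE => _ H _ _; apply: H. Qed.

Lemma Ed_sum n (I : Type) (s : seq I) (P : pred I) (F : I -> E) :
  (forall i, P i -> F i \in Ed n) -> \sum_(i <- s | P i) F i \in Ed n.
Proof.
by move=> HF; apply: (big_ind (fun x => x \in Ed n)); [exact: Ed0 | exact: EdD |].
Qed.

Lemma submodule0_Ed n : submodule0 Rd (Ed n).
Proof.
split; [exact: Ed0 | exact: EdD |].
by move=> r x Hr Hx; rewrite -[n]add0r; apply: EdZ.
Qed.

(* Uniqueness of homogeneous decompositions, applied to the family of the
   [m]-parts of [ts] minus [x] in degree [n]. *)
Lemma homog_component (ts : seq (int * E)) x n :
  (forall p, p \in ts -> p.2 \in Ed p.1) -> x \in Ed n ->
  x = \sum_(p <- ts) p.2 -> x = \sum_(p <- ts | p.1 == n) p.2.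
Proof.
move=> Hts Hx Hsum.
pose s := undup (n :: map fst ts).
pose G m := \sum_(p <- ts | p.1 == m) p.2 - (if m == n then x else 0).
have sum_pred1 (F : int -> E) m : m \in s -> \sum_(k <- s | k == m) F k = F m.
  move=> ms; rewrite -big_filter filter_pred1_uniq ?undup_uniq //.
  exact: big_seq1.
have HG m : G m \in Ed m.
  apply: EdB; first by rewrite big_seq_cond; apply: Ed_sum => p /andP[/Hts + /eqP <-].
  by case: eqP => [->|_] //; exact: Ed0.
have sumG : \sum_(m <- s) G m = 0.
  rewrite big_split /= sumrN (exchange_big_dep xpredT) //= big_seq_cond.
  rewrite (eq_bigr (fun p => p.2)); last first.
    move=> p /andP[pts _]; under eq_bigl => m do rewrite eq_sym.
    by rewrite sum_pred1 // mem_undup in_cons map_f ?orbT.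
  rewrite -big_seq_cond -big_mkcond /= sum_pred1 ?mem_undup ?mem_head //.
  by rewrite -Hsum subrr.
case: HE => _ _ _ /(_ s G (undup_uniq _) HG sumG n).
by rewrite mem_undup mem_head /G eqxx => /(_ isT) /eqP; rewrite subr_eq0 => /eqP.
Qed.

Lemma homog_component_eq0 (ts : seq (int * E)) x n :
  (forall p, p \in ts -> p.2 \in Ed p.1) -> (forall p, p \in ts -> p.1 = n -> p.2 = 0) ->
  x \in Ed n -> x = \sum_(p <- ts) p.2 -> x = 0.
Proof.
move=> Hts Hn Hx /(homog_component Hts Hx) ->.
by rewrite big_seq_cond big1 // => p /andP[pts /eqP]; apply: Hn.
Qed.

Definition nonzero_component (t : int) := exists x, x \in Ed t /\ x != 0.

Lemma nonzero_componentN t x : ~ nonzero_component t -> x \in Ed t -> x = 0.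
Proof. by move=> Hnz Hx; apply/eqP; apply: contraT => nx; case: Hnz; exists x. Qed.

Lemma Rplus_torsion_top (s : int) x :
  (forall t, s < t -> ~ nonzero_component t) -> x \in Ed s -> Rplus_torsion Rd x.
Proof.
move=> top Hx; exists 1%N => -[|r [|]] //= _ Hr.
have [N [f [Hf ->]]] := Hr r (mem_head _ _).
rewrite big_seq1 scaler_suml big1 // => i _.
by apply: (nonzero_componentN (top (i.+1%:Z + s) _)); [lia | exact: EdZ].
Qed.

Lemma is_a0_top (reg s : int) : is_a0 Rd Ed reg -> nonzero_component s ->
  (forall t, s < t -> ~ nonzero_component t) -> reg = s.
Proof.
move=> [[x [Hx nx _]] reg_max] [y [Hy ny]] top.
apply/eqP; rewrite eq_le reg_max ?andbT.
  by rewrite leNgt; apply/negP => /top; apply; exists x.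
by exists y; split=> //; exact: Rplus_torsion_top top Hy.
Qed.

End GradedModule.

Section Length.
Variables (R : comNzRingType) (Rd : nat -> {pred R}) (E : lmodType R).
Variable Ed : int -> {pred E}.
Hypothesis HE : graded_module Rd Ed.
Variable len : int -> nat.
Hypothesis Hlen : forall t, has_length Rd (Ed t) (len t).
Variable e : nat.
Hypothesis He : has_length Rd (@predT E) e.

Lemma len_gt0 t : (0 < len t)%N <-> nonzero_component Ed t.
Proof.
split=> [len_pos | [x [Hx nx]]].
  have [[c [Hc Hc_strict]] _] := Hlen t.
  have [_ [x [c1x nc0x]]] := Hc_strict 0%N len_pos.
  exists x; split; first by case: (Hc 1%N len_pos) => _; apply.
  by apply: contraNneq nc0x => ->; case: (Hc 0%N isT) => -[].
have [_ len_max] := Hlen t.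
apply: (len_max (fun i => if i == 0%N then (pred1 0 : pred E) : {pred E} else Ed t) 1%N).
split=> [[|[|//]] _ | [|//] _] /=.
- by split; [exact: submodule0_zero | move=> y /eqP->; exact: Ed0 HE _].
- by split=> //; exact: submodule0_Ed.
- by split; [move=> y /eqP->; exact: Ed0 HE _ | exists x; rewrite inE].
Qed.

Definition deg_range (lo : int) (n : nat) : {pred E} :=
  pred_of_prop (fun x => exists f : nat -> E,
    (forall k, f k \in Ed (lo + k%:Z)) /\ x = \sum_(k < n) f k).

Lemma deg_rangeP lo n x :
  x \in deg_range lo n <->
  exists f : nat -> E, (forall k, f k \in Ed (lo + k%:Z)) /\ x = \sum_(k < n) f k.
Proof. exact: pred_of_propP. Qed.

Lemma submodule0_deg_range lo n : submodule0 Rd (deg_range lo n).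
Proof.
split.
- apply/deg_rangeP; exists (fun _ => 0); split; last by rewrite big1.
  by move=> k; exact: Ed0 HE _.
- move=> _ _ /deg_rangeP[f [Hf ->]] /deg_rangeP[f' [Hf' ->]].
  apply/deg_rangeP; exists (fun k => f k + f' k); split; last by rewrite big_split.
  by move=> k; apply: (EdD HE).
- move=> r _ Hr /deg_rangeP[f [Hf ->]].
  apply/deg_rangeP; exists (fun k => r *: f k); split; last by rewrite scaler_sumr.
  by move=> k; case: (submodule0_Ed HE (lo + k%:Z)) => _ _; apply.
Qed.

Lemma deg_range_Ed_eq0 lo n x : x \in deg_range lo n -> x \in Ed (lo + n%:Z) -> x = 0.
Proof.
move=> /deg_rangeP[f [Hf Hsum]] Hx.
apply: (homog_component_eq0 HE (ts := [seq (lo + k%:Z, f k) | k <- iota 0 n])) Hx _.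
- by move=> p /mapP[k _ ->] /=.
- by move=> p /mapP[k]; rewrite mem_iota /= => lt_kn -> /= /eqP; lia.
- by rewrite Hsum big_map -(big_mkord xpredT f) /index_iota subn0.
Qed.

Lemma add_deg_range lo n :
  {subset add_pred (deg_range lo n) (Ed (lo + n%:Z)) <= deg_range lo n.+1}.
Proof.
move=> _ /add_predP[_ [y [/deg_rangeP[f [Hf ->]] Hy ->]]].
apply/deg_rangeP; exists (fun k => if (k < n)%N then f k else if k == n then y else 0).
split=> [k|]; first by case: ifP => // _; case: eqP => [->|_] //; exact: Ed0 HE _.
rewrite big_ord_recr /= ltnn eqxx; congr (_ + _).
by apply: eq_bigr => i _; rewrite ltn_ord.
Qed.

Lemma chain0_deg_range lo n :
  exists c, chain0 Rd (deg_range lo n) c (\sum_(k < n) len (lo + k%:Z)).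
Proof.
elim: n => [|n [c Hc]].
  exists (fun _ => (pred1 0 : pred E) : {pred E}); rewrite big_ord0; split=> // i _.
  have [D0 _ _] := submodule0_deg_range lo 0.
  by split; [exact: submodule0_zero | move=> x /eqP->].
have [[ch Hch] _] := Hlen (lo + n%:Z).
have [c' Hc'] := chain0_add (submodule0_deg_range lo n) (EdB HE (n := _))
  (@deg_range_Ed_eq0 lo n) Hc Hch.
by exists c'; rewrite big_ord_recr; exact: chain0_sub (@add_deg_range lo n) Hc'.
Qed.

Lemma sum_len_le lo n : (\sum_(k < n) len (lo + k%:Z) <= e)%N.
Proof.
have [c Hc] := chain0_deg_range lo n.
by case: He => _; apply; apply: chain0_sub Hc.
Qed.

Lemma sum_upto_len_le d q n : sum_upto len d q ->
  (q + \sum_(i < n) len (d + i.+1%:Z)%R <= e)%N.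
Proof.
move=> [lo [le_lod _ ->]].
rewrite big_mkord; have := sum_len_le lo (`|d - lo|.+1 + n); rewrite big_split_ord /=.
suff -> : \sum_(i < n) len (d + i.+1%:Z) =
           \sum_(i < n) len (lo + (`|d - lo|.+1 + i)%:Z) by [].
by apply: eq_bigr => i _; congr len; lia.
Qed.

End Length.

Lemma nth_take_drop (T : Type) (x0 : T) (s : seq T) i k : (i < size s)%N ->
  nth x0 (take i s ++ drop i.+1 s) k = nth x0 s (bump i k).
Proof.
move=> lt_is; rewrite nth_cat size_takel ?(ltnW lt_is) // /bump.
case: ltnP => [lt_ki | le_ik]; first by rewrite nth_take // leqNgt lt_ki.
rewrite nth_drop; congr nth; lia.
Qed.

Section Generators.
Variables (R : comNzRingType) (Rd : nat -> {pred R}) (E : lmodType R).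
Variable Ed : int -> {pred E}.
Hypothesis HE : graded_module Rd Ed.
Variables (g : seq E) (dg : seq int).
Hypothesis Hg : minimal_homogeneous_generators Ed g dg.

Lemma generator_neq0 i : (i < size g)%N -> g`_i != 0.
Proof.
move=> lt_ig; apply/eqP => gi0; case: Hg => _ _ Hgen Hmin.
apply: (Hmin i lt_ig) => x; have [c ->] := Hgen x.
exists (fun k => c (bump i k)).
have -> : size (take i g ++ drop i.+1 g) = (size g).-1.
  by rewrite size_cat size_takel ?size_drop; lia.
rewrite (bigD1_ord (Ordinal lt_ig)) //= gi0 scaler0 add0r.
by apply: eq_bigr => k _; rewrite nth_take_drop.
Qed.

Lemma nonzero_component_generator t : t \in dg -> nonzero_component Ed t.
Proof.
case: Hg => Hsz Hdeg _ _ dg_t.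
have lt_tg : (index t dg < size g)%N by rewrite Hsz index_mem.
exists g`_(index t dg); split; last exact: generator_neq0.
by have := Hdeg _ lt_tg; rewrite nth_index.
Qed.

Hypothesis HR : graded_ring Rd.
Hypothesis Hstd : standard_graded Rd.

(* [r *: y] lies in [R_1 E_t] because [R_(m+1) = R_1 R_m]. *)
Lemma scale_homog_eq0 t (m : nat) r s y : ~ nonzero_component Ed t ->
  r \in Rd m.+1 -> y \in Ed s -> m%:Z + s = t -> r *: y = 0.
Proof.
move=> Ht Hr Hy deg_t; have [a [b [Hab _ Hb ->]]] := Hstd Hr.
rewrite scaler_suml big1 // => l _.
rewrite -scalerA (nonzero_componentN Ht (x := b`_l *: y)) ?scaler0 // -deg_t.
by apply: (EdZ HE) => //; apply: Hb; rewrite -Hab.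
Qed.

Variable d : int.
Hypothesis Hdmax : forall i, i \in dg -> i <= d.

(* Every element is a sum of terms [f *: g_i] with [f] homogeneous; those of
   degree [t + 1] have [deg f > 0] since [deg g_i <= d <= t]. *)
Lemma component_eq0_succ (t : int) : d <= t ->
  ~ nonzero_component Ed t -> ~ nonzero_component Ed (t + 1).
Proof.
move=> le_dt Ht [x [Hx /eqP]]; apply.
have [Hsz Hdeg Hgen _] := Hg; have [c Hxc] := Hgen x.
pose decomp z := exists ts : seq (int * E),
  [/\ forall p, p \in ts -> p.2 \in Ed p.1,
      forall p, p \in ts -> p.1 = t + 1 -> p.2 = 0
    & z = \sum_(p <- ts) p.2].
suff [ts [Hts Hts0 Hsum]] : decomp x by exact (homog_component_eq0 HE Hts Hts0 Hx Hsum).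
rewrite {}Hxc; apply: (big_ind decomp).
- by exists [::]; rewrite big_nil.
- move=> _ _ [ts1 [H1 H1' ->]] [ts2 [H2 H2' ->]]; exists (ts1 ++ ts2).
  by rewrite big_cat; split=> // p; rewrite mem_cat => /orP[]; auto.
move=> i _; have [_ _ _ Hdec _] := HR; have [N [f [Hf ->]]] := Hdec (c i).
have lt_ig := ltn_ord i; have dg_i : dg`_i <= d by rewrite Hdmax ?mem_nth -?Hsz.
set s := dg`_i in dg_i *.
exists [seq (k%:Z + s, f k *: g`_i) | k <- iota 0 N]; split.
- by move=> p /mapP[k _ ->] /=; apply: (EdZ HE); rewrite ?Hdeg.
- move=> p /mapP[[|k] _ ->] /= deg_p; first lia.
  by apply: (scale_homog_eq0 Ht (Hf k.+1) (Hdeg _ lt_ig)); lia.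
rewrite big_map scaler_suml -(big_mkord xpredT (fun k => f k *: g`_i)).
by rewrite /index_iota subn0.
Qed.

Lemma nonzero_component_below (t s : int) : d <= t <= s ->
  nonzero_component Ed s -> nonzero_component Ed t.
Proof.
move=> /andP[le_dt le_ts] Hs; apply: NNPP => Ht; move: Hs.
have [k ->] : exists k : nat, s = t + k%:Z by exists `|s - t|%N; lia.
clear le_ts.
elim: k => [|k IH]; first by rewrite addr0.
by rewrite (_ : t + k.+1%:Z = t + k%:Z + 1); [apply: component_eq0_succ IH; lia | lia].
Qed.

End Generators.

Lemma sum_pos_ge (F : nat -> nat) n :
  (forall i, (i < n)%N -> (0 < F i)%N) -> (n <= \sum_(i < n) F i)%N.
Proof.
move=> F_gt0; rewrite -[X in (X <= _)%N]card_ord -sum1_card.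
by apply: leq_sum => i _; exact: F_gt0.
Qed.

Lemma sum_pos_le_eq1 (F : nat -> nat) n :
  (forall i, (i < n)%N -> (0 < F i)%N) -> (\sum_(i < n) F i <= n)%N ->
  forall i, (i < n)%N -> F i = 1%N.
Proof.
move=> F_gt0 le_sum_n i lt_in.
have sumF : (\sum_(j < n) F j = \sum_(j < n) (F j).-1 + n)%N.
  rewrite -[X in (_ + X)%N]card_ord -sum1_card -big_split /=.
  by apply: eq_bigr => j _; rewrite addn1 prednK ?F_gt0.
have /eqP : (\sum_(j < n) (F j).-1 = 0)%N by move: le_sum_n; rewrite sumF; lia.
rewrite sum_nat_eq0 => /forallP/(_ (Ordinal lt_in))/eqP /=.
by have := F_gt0 i lt_in; lia.
Qed.

Lemma top_degree_count (len : int -> nat) (d : int) (n e q : nat) :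
  (forall i, (i < n)%N -> (0 < len (d + i.+1%:Z)%R)%N) ->
  (forall t : int, d + n%:Z < t -> len t = 0%N) ->
  (q + \sum_(i < n) len (d + i.+1%:Z)%R <= e)%N ->
  d + n%:Z <= d + e%:Z - q%:Z /\
  (d + n%:Z = d + e%:Z - q%:Z <->
    (forall t : int, d + 1 <= t <= d + e%:Z - q%:Z -> len t = 1%N) /\
    (forall t : int, d + e%:Z - q%:Z + 1 <= t -> len t = 0%N)).
Proof.
move=> len_gt0 len_eq0 le_sum_e; have le_sum := sum_pos_ge len_gt0.
have le_top : d + n%:Z <= d + e%:Z - q%:Z by lia.
split=> //; split=> [eq_top | [len1 len0]].
  split=> [t /andP[lt_dt le_t] | t lt_t]; last by apply: len_eq0; lia.
  have := sum_pos_le_eq1 len_gt0 _ (i := absz (t - d - 1)%R).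
  by rewrite (_ : d + _ = t); [apply; lia | lia].
apply/eqP; rewrite eq_le le_top leNgt; apply/negP => lt_top.
by have := len1 (d + e%:Z - q%:Z); rewrite len_eq0 //; lia.
Qed.

Theorem lemma2p3 (R : comNzRingType) (Rd : nat -> {pred R})
  (HR : graded_ring Rd) (Hstd : standard_graded Rd) (HN : noetherian_ring R)
  (Hloc : local0 Rd) (Hart : artinian0 Rd)
  (E : lmodType R) (Ed : int -> {pred E})
  (HE : graded_module Rd Ed) (Hfg : finitely_generated E) (Hdim : dim_zero E)
  (g : seq E) (dg : seq int) (Hg : minimal_homogeneous_generators Ed g dg)
  (d : int) (Hd : d \in dg) (Hdmax : forall i, i \in dg -> i <= d)
  (len : int -> nat) (Hlen : forall t, has_length Rd (Ed t) (len t))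
  (e : nat) (He : has_length Rd (@predT E) e)
  (q : nat) (Hq : sum_upto len d q)
  (reg : int) (Hreg : is_a0 Rd Ed reg) :
  reg <= d + e%:Z - q%:Z /\
  (reg = d + e%:Z - q%:Z <->
    (forall t : int, d + 1 <= t <= d + e%:Z - q%:Z -> len t = 1%N) /\
    (forall t : int, d + e%:Z - q%:Z + 1 <= t -> len t = 0%N)).
Proof.
have no_gap := nonzero_component_below HE Hg HR Hstd Hdmax.
have [P PP] : exists P : pred nat, forall k, P k <-> nonzero_component Ed (d + k%:Z).
  by exists (pred_of_prop (fun k : nat => nonzero_component Ed (d + k%:Z))) => k;
     apply: pred_of_propP.
have P0 : P 0%N.
  by apply/PP; rewrite addr0; exact: (nonzero_component_generator Hg Hd).
have P_le_e k : P k -> (k <= e)%N.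
  move=> /PP Pk; apply: ltnW; apply: (leq_trans _ (sum_len_le HE Hlen He d k.+1)).
  apply: (sum_pos_ge (F := fun i => len (d + i%:Z))) => i lt_ik.
  by apply/(len_gt0 HE Hlen); apply: no_gap Pk; lia.
have [k0 /PP top_nz top_max] := ex_maxnP (ex_intro P 0%N P0) P_le_e.
have top_eq0 (t : int) : d + k0%:Z < t -> ~ nonzero_component Ed t.
  move=> lt_t Ht; have /top_max : P `|t - d|%N.
    by apply/PP; rewrite (_ : d + _ = t) //; lia.
  lia.
rewrite (is_a0_top HE Hreg top_nz top_eq0).
apply: top_degree_count (sum_upto_len_le HE Hlen He k0 Hq).
- by move=> i lt_ik0; apply/(len_gt0 HE Hlen); apply: no_gap top_nz; lia.
- move=> t /top_eq0 Ht; apply/eqP; rewrite -leqn0 leqNgt.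
  by apply/negP => /(len_gt0 HE Hlen).
Qed.
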